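(* There is an absolute constant $c$ such that for every $N\ge1$ and every $\epsilon\in[0,1]$, every randomized XOR decision tree computing ${\rm MAJORITY}$ on $N$-bit inputs with zero-sided error $\epsilon$ has cost at least $\frac23N-\epsilon N-c\sqrt N$.
   Context: For $X=X_0X_1\cdots X_{N-1}\in\{0,1\}^N$, ${\rm MAJORITY}(X)=0$ if $X$ contains more zeros than ones and ${\rm MAJORITY}(X)=1$ otherwise. An XOR decision tree on $N$-bit inputs is a deterministic adaptive algorithm that on input $X$ makes a sequence of queries, each either a single bit $X_i$ or $X_i\oplus X_j$ ($0\le i,j\le N-1$), each chosen depending on previous answers, and then outputs a value. A randomized XOR decision tree is a probability distribution over XOR decision trees; its cost on input $X$ is the maximum number of queries made on $X$ over all trees in its support, and its cost is the maximum of this over all $X\in\{0,1\}^N$. It computes $f$ with zero-sided error $\epsilon$ if on every input $X$ it outputs $f(X)$ with probability at least $1-\epsilon$ and otherwise outputs ''I don't know'' (never an incorrect value). *)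

From HB Require Import structures.
From mathcomp Require Import all_boot all_order all_algebra.
From Stdlib Require Import Rdefinitions.
From mathcomp Require Import Rstruct.
Set Implicit Arguments. Unset Strict Implicit. Unset Printing Implicit Defensive.
Import Order.TTheory GRing.Theory Num.Theory.
Local Open Scope ring_scope.

Definition input (N : nat) := {ffun 'I_N -> bool}.

Definition majority (N : nat) (X : input N) : bool :=
  ~~ (ltn #|[set i | X i]| #|[set i | ~~ X i]|).

Inductive query (N : nat) : Type :=
| QBit of 'I_N
| QXor of 'I_N & 'I_N.

Definition eval_query (N : nat) (q : query N) (X : input N) : bool :=
  match q with
  | QBit i => X i
  | QXor i j => X i (+) X j
  end.

(* XOR decision tree; a leaf outputs Some b (the value b) or None ("I don't know") *)
Inductive xdt (N : nat) : Type :=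
| Leaf of option bool
| Node of query N & xdt N & xdt N.

Fixpoint run (N : nat) (t : xdt N) (X : input N) : option bool * nat :=
  match t with
  | Leaf o => (o, 0%N)
  | Node q t0 t1 =>
      let r := run (if eval_query q X then t1 else t0) X in (r.1, r.2.+1)
  end.

Definition output (N : nat) (t : xdt N) (X : input N) := (run t X).1.
Definition nqueries (N : nat) (t : xdt N) (X : input N) := (run t X).2.

(* A randomized XOR decision tree: a finitely supported probability
   distribution over XOR decision trees, given as a list of (tree, weight). *)
Definition is_distribution (N : nat) (D : seq (xdt N * R)) : Prop :=
  List.Forall (fun p => 0 <= p.2) D /\ \sum_(p <- D) p.2 = 1.

Definition posw (x : R) : bool := 0 < x.

Definition rcost (N : nat) (D : seq (xdt N * R)) : nat :=
  \max_(X : input N) \max_(p <- D | posw p.2) nqueries p.1 X.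

Definition zero_sided (N : nat) (f : input N -> bool) (D : seq (xdt N * R))
    (eps : R) : Prop :=
  forall X : input N,
    List.Forall (fun p => 0 < p.2 ->
       output p.1 X = Some (f X) \/ output p.1 X = None) D /\
    1 - eps <= \sum_(p <- D | output p.1 X == Some (f X)) p.2.

From Stdlib Require Import Rdefinitions.
From mathcomp Require Import Rstruct.
From mathcomp Require Import all_boot all_order all_algebra.
From mathcomp Require Import lra zify.
Set Implicit Arguments. Unset Strict Implicit. Unset Printing Implicit Defensive.
Import Order.TTheory GRing.Theory Num.Theory.

(* A labelling splits the variables into labelled
   classes and a class [None]; along a run, a bit query sends the class of the
   bit to [None] and a XOR query merges the two classes involved, so flipping
   every variable of some labelled classes changes no answer received. The
   potential of an input is the number of labelled classes with a nonzero
   signed sum: it is N at the root and, averaged over a set of inputs closed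
   under class flips, twice the potential drops by at most 3 per query (a merge
   of classes with sums x and y is paired with the input where the second class
   is flipped). At a leaf where a zero-error tree answers, the majority is
   invariant under class flips, which forces twice the potential below
   |bias X| + |bias X'|, X' being X with every class flipped. Summing over all
   inputs, 2N * #correct <= 3k 2^N + 2 sum |bias|, and sum |bias| <= 2^N sqrt N
   because the bias has variance N; averaging over the random tree concludes. *)

Definition labelling (N : nat) := 'I_N -> option 'I_N.

(* [QXor a b] moves the class of [b] into the class of [a] (into [None] when
   [a] is in [None]); if [b] is in [None], the class of [a] is sent to [None]. *)
Definition relabel N (lab : labelling N) (q : query N) (o : option 'I_N) :=
  match q with
  | QBit a => if o == lab a then None else o
  | QXor a b => if lab b == None then (if o == lab a then None else o)
                else if o == lab b then lab a else o
  end.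

Definition update N (lab : labelling N) (q : query N) : labelling N :=
  fun u => relabel lab q (lab u).

Fixpoint run_labelling N (t : xdt N) (lab : labelling N) (X : input N) :=
  match t with
  | Leaf _ => lab
  | Node q t0 t1 => run_labelling (if eval_query q X then t1 else t0) (update lab q) X
  end.

Definition flip_classes N (L : labelling N) (g : option 'I_N -> bool) (X : input N) :
  input N := [ffun u => X u (+) g (L u)].

Definition coarser N (lab L : labelling N) :=
  (forall u v, lab u = lab v -> L u = L v) /\ (forall u, lab u = None -> L u = None).

Lemma relabel_None N (lab : labelling N) q : relabel lab q None = None.
Proof.
case: q => [a|a b] /=; first by case: ifP.
by case: ifP => [_|/eqP nb]; case: ifP => // /eqP/esym.
Qed.

Lemma coarser_trans N (l1 l2 l3 : labelling N) :
  coarser l1 l2 -> coarser l2 l3 -> coarser l1 l3.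
Proof. by move=> [h1 h2] [h3 h4]; split=> [u v /h1/h3|u /h2/h4]. Qed.

Lemma coarser_update N (lab : labelling N) q : coarser lab (update lab q).
Proof. by split=> [u v|u]; rewrite /update => ->; rewrite ?relabel_None. Qed.

Lemma coarser_run_labelling N (t : xdt N) lab X : coarser lab (run_labelling t lab X).
Proof.
elim: t lab => [o|q t0 IH0 t1 IH1] lab //=.
by apply: coarser_trans (coarser_update lab q) _; case: eval_query.
Qed.

Lemma update_resolves_query N (lab : labelling N) q :
  match q with
  | QBit a => update lab q a = None
  | QXor a b => update lab q a = update lab q b
  end.
Proof.
rewrite /update; case: q => [a|a b] /=; first by rewrite eqxx.
case: ifP => [/eqP ->|nb]; first by rewrite eqxx; case: ifP.
by rewrite eqxx; case: ifP => // /eqP.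
Qed.

Lemma eval_query_flip N (lab L : labelling N) q g X :
  coarser (update lab q) L -> g None = false ->
  eval_query q (flip_classes L g X) = eval_query q X.
Proof.
move=> [h1 h2] gN; have := update_resolves_query lab q.
case: q h1 h2 => [a|a b] h1 h2 /= H; rewrite !ffunE; first by rewrite (h2 _ H) gN addbF.
by rewrite (h1 _ _ H) addbACA addbb addbF.
Qed.

Lemma run_flip_classes N (t : xdt N) lab X g : g None = false ->
  let X' := flip_classes (run_labelling t lab X) g X in
  run t X' = run t X /\ run_labelling t lab X' = run_labelling t lab X.
Proof.
move=> gN; elim: t lab => [o|q t0 IH0 t1 IH1] lab //=.
rewrite (eval_query_flip (lab := lab)) //; last first.
  by case: eval_query; apply: coarser_run_labelling.
by case: eval_query; [case: (IH1 (update lab q)) | case: (IH0 (update lab q))] => -> ->.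
Qed.

Lemma flip_classesK N (L : labelling N) g : involutive (flip_classes L g).
Proof. by move=> X; apply/ffunP => u; rewrite !ffunE -addbA addbb addbF. Qed.

Section ClassSums.
Local Open Scope ring_scope.
Variable N : nat.
Implicit Types (L : labelling N) (X : input N).

Definition bit_sign (b : bool) : int := if b then 1 else -1.

Definition bias X : int := \sum_(u < N) bit_sign (X u).

Definition class_sum L X (l : 'I_N) : int := \sum_(u | L u == Some l) bit_sign (X u).

Definition fixed_sum L X : int := \sum_(u | L u == None) bit_sign (X u).

Definition nz_classes L X : nat := (\sum_(l < N) (class_sum L X l != 0)%R)%N.

Lemma class_sum_flip L g X l :
  class_sum L (flip_classes L g X) l
  = if g (Some l) then - class_sum L X l else class_sum L X l.
Proof.
rewrite /class_sum; case: ifP => gl; last first.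
  by apply: eq_bigr => u /eqP Lu; rewrite ffunE Lu gl addbF.
by rewrite -sumrN; apply: eq_bigr => u /eqP Lu; rewrite ffunE Lu gl addbT; case: (X u).
Qed.

Lemma fixed_sum_flip L g X :
  g None = false -> fixed_sum L (flip_classes L g X) = fixed_sum L X.
Proof. by move=> gN; apply: eq_bigr => u /eqP Lu; rewrite ffunE Lu gN addbF. Qed.

Lemma bias_split L X : bias X = fixed_sum L X + \sum_(l < N) class_sum L X l.
Proof.
rewrite /bias (bigID (fun u => L u == None)) /=; congr (_ + _).
rewrite (partition_big (fun u => if L u is Some l then l else u) predT) //.
by apply: eq_bigr => l _; apply: eq_bigl => u; case: (L u).
Qed.

Lemma majority_bias X : majority X = (0 <= bias X).
Proof.
rewrite /majority /bias (bigID (fun u => X u)) /=.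
rewrite (eq_bigr (fun _ => 1)) => [|u ->] //.
rewrite [X in _ + X](eq_bigr (fun _ => -1)) => [|u /negbTE ->] //.
rewrite sumrN !sumr_const subr_ge0 !natz lez_nat.
by rewrite -leqNgt !cardsE.
Qed.

Lemma nz_classes_le_sum_absz L X :
  (nz_classes L X <= \sum_(l < N) absz (class_sum L X l))%N.
Proof. by apply: leq_sum => l _; case: eqP => [->|/eqP]; lia. Qed.

Lemma nz_classes_le L X : (nz_classes L X <= N)%N.
Proof.
rewrite -[leqRHS]card_ord -sum1_card.
by apply: leq_sum => l _; apply: leq_b1.
Qed.

Lemma nz_classes_discrete X : nz_classes Some X = N.
Proof.
rewrite /nz_classes -[RHS]card_ord -sum1_card; apply: eq_bigr => l _.
rewrite /class_sum (eq_bigl (pred1 l)) => [|u] //.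
by rewrite big_pred1_eq; case: (X l).
Qed.

Lemma nz_classes_kill L L' c X :
  (forall u, L' u = if L u == c then None else L u) ->
  (nz_classes L X <= (nz_classes L' X).+1)%N.
Proof.
move=> L'E.
have same l : Some l != c -> class_sum L' X l = class_sum L X l.
  move=> lc; apply: eq_bigl => u; rewrite L'E.
  by case: (L u =P c) => // ->; rewrite [c == _]eq_sym (negbTE lc).
case: c L'E same => [l0|] L'E same; last first.
  suff -> : nz_classes L' X = nz_classes L X by [].
  by apply: eq_bigr => l _; rewrite same.
have killed : class_sum L' X l0 = 0.
  by rewrite /class_sum big_pred0 // => u; rewrite L'E; case: ifP => // /negbTE.
rewrite /nz_classes (bigD1 l0) // [in X in (_ <= X)%N](bigD1 l0) //= killed eqxx add0n.
set others := (\sum_(l < N | l != l0) (class_sum L' X l != 0)%R)%N.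
have -> : others = (\sum_(l < N | l != l0) (class_sum L X l != 0)%R)%N.
  by apply: eq_bigr => l nl; rewrite same // (inj_eq Some_inj).
by rewrite addnC -addn1 leq_add2l leq_b1.
Qed.

Lemma nz_classes_merge L L' l1 l2 X : l1 != l2 ->
  (forall u, L' u = if L u == Some l2 then Some l1 else L u) ->
  (nz_classes L X + ((class_sum L X l1 + class_sum L X l2 : int) != 0)%R
   = nz_classes L' X + (class_sum L X l1 != 0)%R + (class_sum L X l2 != 0)%R)%N.
Proof.
move=> l12 L'E; have l21 : l2 != l1 by rewrite eq_sym.
have merged : class_sum L' X l1 = class_sum L X l1 + class_sum L X l2.
  rewrite /class_sum (bigID (fun u => L u == Some l2)) /= addrC.
  congr (_ + _); apply: eq_bigl => u; rewrite L'E.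
    case: (L u) => [l|] //; rewrite !(inj_eq Some_inj).
    by case: (l =P l2) => [e|_]; rewrite ?e; rewrite ?eqxx ?(negbTE l21) ?andbT.
  case: (L u) => [l|] //; rewrite !(inj_eq Some_inj).
  by case: (l =P l2) => [e|_]; rewrite ?e; rewrite ?eqxx ?andbF.
have emptied : class_sum L' X l2 = 0.
  rewrite /class_sum big_pred0 // => u; rewrite L'E.
  case: (L u) => [l|] //; rewrite !(inj_eq Some_inj).
  by case: (l =P l2) => [_|/eqP/negbTE ne]; rewrite (inj_eq Some_inj) ?(negbTE l12) ?ne.
have same l : l != l1 -> l != l2 -> class_sum L' X l = class_sum L X l.
  move=> n1 n2; apply: eq_bigl => u; rewrite L'E.
  case: (L u) => [l'|] //; rewrite !(inj_eq Some_inj).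
  case: (l' =P l2) => [->|_]; rewrite (inj_eq Some_inj) //.
  by rewrite ![_ == l]eq_sym (negbTE n1) (negbTE n2).
rewrite /nz_classes (bigD1 l1) //= (bigD1 l2 l21) /=.
rewrite [in RHS](bigD1 l1) //= [in RHS](bigD1 l2 l21) /= merged emptied eqxx.
set others := (\sum_(l < N | (l != l1) && (l != l2)) (class_sum L' X l != 0)%R)%N.
have -> : others = (\sum_(l < N | (l != l1) && (l != l2)) (class_sum L X l != 0)%R)%N.
  by apply: eq_bigr => l /andP [n1 n2]; rewrite same.
rewrite add0n; set S := (\sum_(i < N | _) _)%N; lia.
Qed.
End ClassSums.

Lemma nonzero_sum_diff (x y : int) :
  2 * ((x != 0)%R + (y != 0)%R) <= 3 + (x + y != 0)%R + (x - y != 0)%R.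
Proof.
case: (x =P 0)%R => [->|]; case: (y =P 0)%R => [->|] /=; rewrite ?add0r ?oppr_eq0 //.
by case: (x + y =P 0)%R; case: (x - y =P 0)%R => //=; lia.
Qed.

Lemma big_involution (R : Type) (idx : R) (op : Monoid.com_law idx) (T : finType)
    (A : {set T}) (s : T -> T) (F : T -> R) :
  involutive s -> (forall x, x \in A -> s x \in A) ->
  \big[op/idx]_(x in A) F x = \big[op/idx]_(x in A) F (s x).
Proof.
move=> sK sA; rewrite (reindex_inj (inv_inj sK)); apply: eq_bigl => x.
by apply/idP/idP => [/sA|/sA]; rewrite ?sK.
Qed.

Definition flip_closed N (lab : labelling N) (A : {set input N}) :=
  forall g X, g None = false -> X \in A -> flip_classes lab g X \in A.

Section UpdateOnAverage.
Variables (N : nat) (A : {set input N}).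

Lemma sum_nz_classes_kill (L L' : labelling N) :
  (forall X, nz_classes L X <= (nz_classes L' X).+1) ->
  2 * \sum_(X in A) nz_classes L X <= \sum_(X in A) (2 * nz_classes L' X + 3).
Proof. by move=> h; rewrite big_distrr /=; apply: leq_sum => X _; have := h X; lia. Qed.

(* Flipping the class [l2] turns the merged sum [S1 + S2] into [S1 - S2]; by
   [nonzero_sum_diff] the two inputs of such a pair lose at most 3 nonzero
   classes together. *)
Lemma sum_nz_classes_merge (L L' : labelling N) l1 l2 : l1 != l2 ->
  (forall u, L' u = if L u == Some l2 then Some l1 else L u) -> flip_closed L A ->
  2 * \sum_(X in A) nz_classes L X <= \sum_(X in A) (2 * nz_classes L' X + 3).
Proof.
move=> l12 L'E closedA; set s := flip_classes L (fun o => o == Some l2).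
have pair X : 2 * (nz_classes L X + nz_classes L (s X))
              <= 2 * (nz_classes L' X + nz_classes L' (s X)) + 6.
  have := nz_classes_merge X l12 L'E; have := nz_classes_merge (s X) l12 L'E.
  rewrite !class_sum_flip (inj_eq Some_inj) (negbTE l12) eqxx oppr_eq0.
  have := nonzero_sum_diff (class_sum L X l1) (class_sum L X l2); lia.
have sA X : X \in A -> s X \in A by exact: closedA.
have sum_pair (F : input N -> nat) :
    \sum_(X in A) (F X + F (s X)) = 2 * \sum_(X in A) F X.
  by rewrite big_split /= -(big_involution _ F (flip_classesK _ _) sA) mul2n addnn.
rewrite big_distrr /= -(leq_pmul2l (isT : 0 < 2)) -!sum_pair.
by apply: leq_sum => X _; have := pair X; lia.
Qed.

Lemma sum_nz_classes_update (lab : labelling N) q : flip_closed lab A ->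
  2 * \sum_(X in A) nz_classes lab X <= \sum_(X in A) (2 * nz_classes (update lab q) X + 3).
Proof.
move=> closedA; case: q => [a|a b].
  by apply: sum_nz_classes_kill => X; apply: (nz_classes_kill (c := lab a)).
case lb: (lab b) => [l2|]; last first.
  apply: sum_nz_classes_kill => X; apply: (nz_classes_kill (c := lab a)) => u.
  by rewrite /update /= lb.
case la: (lab a) => [l1|]; last first.
  apply: sum_nz_classes_kill => X; apply: (nz_classes_kill (c := Some l2)) => u.
  by rewrite /update /= lb la.
have [e|l12] := eqVneq l1 l2.
  apply: sum_nz_classes_kill => X; apply: (nz_classes_kill (c := None)) => u.
  by rewrite /update /= lb la e; case: (lab u) => [l|] //=; case: ifP => // /eqP ->.
by apply: (sum_nz_classes_merge l12) => // u; rewrite /update /= lb la.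
Qed.

End UpdateOnAverage.

Lemma flip_closed_update N (lab : labelling N) q (A : {set input N}) b :
  flip_closed lab A -> flip_closed (update lab q) [set X in A | eval_query q X == b].
Proof.
move=> closedA g X gN; rewrite !inE => /andP [XA /eqP qX].
rewrite (eval_query_flip (lab := lab)) ?qX ?eqxx ?andbT //.
have -> : flip_classes (update lab q) g X = flip_classes lab (fun o => g (relabel lab q o)) X
  by [].
by apply: closedA; rewrite ?relabel_None.
Qed.

Lemma potential_run N (t : xdt N) (lab : labelling N) (A : {set input N}) :
  flip_closed lab A ->
  2 * \sum_(X in A) nz_classes lab X <=
  \sum_(X in A) (2 * nz_classes (run_labelling t lab X) X + 3 * nqueries t X).
Proof.
elim: t lab A => [o|q t0 IH0 t1 IH1] lab A closedA.
  by rewrite big_distrr /=; apply: leq_sum => X _; rewrite /nqueries /= addn0.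
apply: leq_trans (sum_nz_classes_update q closedA) _.
have branch b (tb : xdt N) :
    (forall lab' A', flip_closed lab' A' -> 2 * \sum_(X in A') nz_classes lab' X <=
       \sum_(X in A') (2 * nz_classes (run_labelling tb lab' X) X + 3 * nqueries tb X)) ->
    \sum_(X in A | eval_query q X == b) (2 * nz_classes (update lab q) X + 3) <=
    \sum_(X in A | eval_query q X == b)
       (2 * nz_classes (run_labelling tb (update lab q) X) X + 3 * (nqueries tb X).+1).
  move=> IHb; have := IHb _ _ (flip_closed_update (q := q) (b := b) closedA).
  have inAb X :
    (X \in [set X in A | eval_query q X == b]) = (X \in A) && (eval_query q X == b).
    by rewrite inE.
  rewrite big_distrr /= (eq_bigl _ _ inAb) [X in _ <= X -> _](eq_bigl _ _ inAb).
  under [X in _ -> _ <= X]eq_bigr => X _ do rewrite mulnS addnCA addnC.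
  by move=> h; rewrite big_split [X in _ <= X]big_split leq_add2r.
have by_answer (F : input N -> nat) : \sum_(X in A) F X =
    \sum_(X in A | eval_query q X == true) F X + \sum_(X in A | eval_query q X == false) F X.
  rewrite (bigID (fun X => eval_query q X == true)); congr (_ + _).
  by apply: eq_bigl => X; case: eval_query; rewrite ?andbT ?andbF.
rewrite !by_answer; apply: leq_add;
  [apply: leq_trans (branch true t1 IH1) _ | apply: leq_trans (branch false t0 IH0) _];
  by apply: eq_leq; apply: eq_bigr => X /andP [_ /eqP qX]; rewrite /nqueries /= qX.
Qed.

Definition never_wrong N (f : input N -> bool) (t : xdt N) :=
  forall X, output t X = Some (f X) \/ output t X = None.

Section Leaf.
Local Open Scope ring_scope.
Variable N : nat.
Implicit Types (L : labelling N) (X : input N).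

Lemma bias_flip_classes L g X : g None = false ->
  bias (flip_classes L g X)
  = fixed_sum L X + \sum_(l < N) (if g (Some l) then - class_sum L X l else class_sum L X l).
Proof.
move=> gN; rewrite (bias_split L) fixed_sum_flip //; congr (_ + _).
by apply: eq_bigr => l _; rewrite class_sum_flip.
Qed.

(* Flipping every class of the right sign pushes the bias to
   [fixed_sum +- \sum |class_sum|]; if this cannot change the majority, the
   fixed part dominates. *)
Lemma sum_absz_class_sum_le L X :
  (forall g, g None = false -> majority (flip_classes L g X) = majority X) ->
  (\sum_(l < N) absz (class_sum L X l) <= absz (fixed_sum L X))%N.
Proof.
move=> inv; rewrite -lez_nat (big_morph Posz PoszD erefl).
set D := \sum_(l < N) _; set F := fixed_sum L X.
have D0 : 0 <= D by apply: sumr_ge0.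
pose gpos o := if o is Some l then class_sum L X l < 0 else false.
pose gneg o := if o is Some l then 0 < class_sum L X l else false.
have up : bias (flip_classes L gpos X) = F + D.
  rewrite bias_flip_classes //; congr (_ + _); apply: eq_bigr => l _ /=.
  by rewrite abszE; case: ifP; lia.
have down : bias (flip_classes L gneg X) = F - D.
  rewrite bias_flip_classes // -sumrN; congr (_ + _); apply: eq_bigr => l _ /=.
  by rewrite abszE; case: ifP; lia.
have same : (0 <= F - D) = (0 <= F + D).
  by rewrite -down -up -!majority_bias !inv.
rewrite abszE; case: (lerP 0 (F + D)) same => h; [move/idP | move/negbT; rewrite -ltNge]; lia.
Qed.
End Leaf.

Definition mirror N (t : xdt N) (X : input N) :=
  flip_classes (run_labelling t Some X) (fun o => o != None) X.

Lemma mirrorK N (t : xdt N) : involutive (mirror t).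
Proof.
move=> X; rewrite /mirror.
have [_ ->] := run_flip_classes t Some X (g := fun o => o != None) erefl.
exact: flip_classesK.
Qed.

Lemma nz_classes_leaf N (t : xdt N) X : never_wrong (@majority N) t ->
  output t X = Some (majority X) ->
  2 * nz_classes (run_labelling t Some X) X <= absz (bias X) + absz (bias (mirror t X)).
Proof.
move=> nw tX; set L := run_labelling t Some X.
have inv g : g None = false -> majority (flip_classes L g X) = majority X.
  move=> gN; have [runE _] := run_flip_classes t Some X gN.
  by case: (nw (flip_classes L g X)); rewrite /output runE -/(output t X) tX => // -[].
have := leq_trans (nz_classes_le_sum_absz L X) (sum_absz_class_sum_le inv).
rewrite /mirror -/L (bias_split L) bias_flip_classes //= sumrN.
set T := (\sum_(l < N) class_sum L X l)%R; set F := fixed_sum L X.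
have : 2 * absz F <= absz (F + T)%R + absz (F - T)%R by lia.
lia.
Qed.

Lemma sum_absz_bias_mirror N (t : xdt N) :
  \sum_(X : input N) absz (bias (mirror t X)) = \sum_(X : input N) absz (bias X).
Proof.
by rewrite (reindex_inj (inv_inj (mirrorK t))); apply: eq_bigr => X _; rewrite mirrorK.
Qed.

Lemma potential_run_discrete N (t : xdt N) :
  2 * N * 2 ^ N
  <= \sum_(X : input N) (2 * nz_classes (run_labelling t Some X) X + 3 * nqueries t X).
Proof.
have closedT : flip_closed (@Some _) [set: input N] by move=> g X _ _; rewrite in_setT.
have whole (F : input N -> nat) : \sum_(X in [set: input N]) F X = \sum_X F X.
  by apply: eq_bigl => X; rewrite in_setT.
have := potential_run t closedT; rewrite !whole (eq_bigr (fun=> N)) => [|X _]; last first.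
  exact: nz_classes_discrete.
by rewrite sum_nat_const card_ffun card_bool card_ord mulnCA mulnC.
Qed.

Lemma tree_cost_bound N (t : xdt N) k : never_wrong (@majority N) t ->
  (forall X, nqueries t X <= k) ->
  2 * N * \sum_(X : input N) (output t X == Some (majority X))
  <= 3 * k * 2 ^ N + 2 * \sum_(X : input N) absz (bias X).
Proof.
move=> nw qk.
have leaf X : 2 * nz_classes (run_labelling t Some X) X
    <= 2 * N * (output t X != Some (majority X)) + absz (bias X) + absz (bias (mirror t X)).
  case: eqP => [/(nz_classes_leaf nw)|_]; first by rewrite muln0.
  by have := nz_classes_le (run_labelling t Some X) X; lia.
have leaves : \sum_X 2 * nz_classes (run_labelling t Some X) X
    <= \sum_X (2 * N * (output t X != Some (majority X)) + absz (bias X)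
               + absz (bias (mirror t X))).
  by apply: leq_sum => X _; exact: leaf.
rewrite [in X in _ <= X]big_split [in X in _ <= X]big_split /= in leaves.
rewrite sum_absz_bias_mirror in leaves.
have queries : \sum_X 3 * nqueries t X <= \sum_(X : input N) 3 * k.
  by apply: leq_sum => X _; rewrite leq_mul2l qk orbT.
have answers : \sum_X 2 * N * (output t X == Some (majority X))
               + \sum_X 2 * N * (output t X != Some (majority X)) = \sum_(X : input N) 2 * N.
  by rewrite -big_split; apply: eq_bigr => X _ /=; rewrite -mulnDr addnC addn_negb muln1.
have := potential_run_discrete t; rewrite big_split /=.
rewrite !sum_nat_const card_ffun card_bool card_ord big_distrr /= in queries answers *.
set S := (\sum_(X : input N) absz (bias X))%N in leaves *.
lia.
Qed.

Section Variance.
Local Open Scope ring_scope.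

Lemma sum_bias_sqr N : \sum_(X : input N) bias X ^+ 2 = (N * 2 ^ N)%:R.
Proof.
pose s (X : input N) u := bit_sign (X u).
have cross u v : u != v -> \sum_(X : input N) s X u * s X v = 0.
  move=> uv; set flip := flip_classes Some (fun o => o == Some u).
  have flipE X : s (flip X) u * s (flip X) v = - (s X u * s X v).
    rewrite /s !ffunE eqxx (inj_eq Some_inj) eq_sym (negbTE uv) addbT addbF.
    by case: (X u) => /=; rewrite ?mulN1r ?mul1r ?opprK.
  have e : \sum_(X : input N) s X u * s X v = \sum_(X : input N) s (flip X) u * s (flip X) v.
    by rewrite (reindex_inj (inv_inj (flip_classesK Some (fun o => o == Some u)))).
  rewrite (eq_bigr _ (fun X _ => flipE X)) sumrN in e.
  by move: e; set S := \sum_(X : input N) _; lia.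
rewrite (eq_bigr (fun X => \sum_u \sum_v s X u * s X v)) => [|X _]; last first.
  by rewrite expr2 mulr_suml; apply: eq_bigr => u _; rewrite mulr_sumr.
rewrite exchange_big (eq_bigr (fun _ => (2 ^ N)%:R)) => [|u _].
  by rewrite sumr_const card_ord natrM mulr_natl.
rewrite exchange_big (bigD1 u) //= [X in _ + X]big1 ?addr0 => [|v vu]; last first.
  by apply: cross; rewrite eq_sym.
rewrite (eq_bigr (fun _ => 1)) => [|X _]; last by rewrite /s; case: (X u).
by rewrite sumr_const card_ffun card_bool card_ord.
Qed.

Lemma sum_norm_le (R : realFieldType) (T : finType) (f : T -> R) (c : R) :
  0 < c -> \sum_x f x ^+ 2 <= #|T|%:R * c ^+ 2 -> \sum_x `|f x| <= #|T|%:R * c.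
Proof.
move=> c0 sq; rewrite -(ler_pM2r c0).
have amgm x : `|f x| * c <= (f x ^+ 2 + c ^+ 2) / 2.
  have := sqr_ge0 (`|f x| - c); rewrite sqrrB real_normK ?num_real //; lra.
apply: le_trans (_ : \sum_x (f x ^+ 2 + c ^+ 2) / 2 <= _).
  by rewrite mulr_suml; apply: ler_sum => x _; apply: amgm.
rewrite -mulr_suml big_split /= sumr_const -mulr_natl -/(#|T|%:R); lra.
Qed.

Lemma sum_absz_bias_le (R : rcfType) N : (0 < N)%N ->
  (\sum_(X : input N) absz (bias X))%:R <= (2 ^ N)%:R * Num.sqrt (N%:R : R).
Proof.
move=> N0; rewrite natr_sum.
under eq_bigr do rewrite natr_absz intr_norm.
have -> : (2 ^ N)%:R = #|{: input N}|%:R :> R by rewrite card_ffun card_bool card_ord.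
apply: sum_norm_le; first by rewrite sqrtr_gt0 ltr0n.
rewrite sqr_sqrtr ?ler0n // card_ffun card_bool card_ord -natrM mulnC.
rewrite -(mulrz_nat _ 1) -(sum_bias_sqr N) rmorph_sum /=.
by apply: ler_sum => X _; rewrite rmorphXn.
Qed.
End Variance.

Lemma ler_sum_In (R : numDomainType) (I : Type) (r : seq I) (F G : I -> R) :
  (forall i, List.In i r -> (F i <= G i)%R) -> (\sum_(i <- r) F i <= \sum_(i <- r) G i)%R.
Proof.
elim: r => [|i r IH] FG; rewrite ?big_nil // !big_cons.
by apply: lerD; [apply: FG; left | apply: IH => j rj; apply: FG; right].
Qed.

Lemma leq_bigmax_In (I : Type) (r : seq I) (P : pred I) (F : I -> nat) i :
  List.In i r -> P i -> F i <= \max_(j <- r | P j) F j.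
Proof.
elim: r => [//|j r IH] /= [<-|ir] Pi; rewrite big_cons; first by rewrite Pi leq_maxl.
by case: ifP => _; [apply: leq_trans (IH ir Pi) (leq_maxr _ _) | apply: IH].
Qed.

Section Distributions.
Local Open Scope ring_scope.
Variable N : nat.
Implicit Types (D : seq (xdt N * R)) (p : xdt N * R).

Lemma nqueries_le_rcost D p X : List.In p D -> 0 < p.2 -> (nqueries p.1 X <= rcost D)%N.
Proof.
move=> pD p0.
apply: leq_trans (leq_bigmax_In (P := fun q => posw q.2) (fun q => nqueries q.1 X) pD p0) _.
exact: (@leq_bigmax _ (fun X => \max_(q <- D | posw q.2) nqueries q.1 X) X).
Qed.

Lemma never_wrong_support (f : input N -> bool) D eps p :
  zero_sided f D eps -> List.In p D -> 0 < p.2 -> never_wrong f p.1.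
Proof. by move=> zs pD p0 X; exact: (proj1 (List.Forall_forall _ _) (zs X).1 p pD p0). Qed.

Lemma mean_le D (F : xdt N -> R) (b : R) : is_distribution D ->
  (forall p, List.In p D -> 0 < p.2 -> F p.1 <= b) -> \sum_(p <- D) p.2 * F p.1 <= b.
Proof.
move=> [w0 w1] Fb; rewrite -[b]mul1r -w1 mulr_suml; apply: ler_sum_In => p pD.
have p0 : 0 <= p.2 := proj1 (List.Forall_forall _ _) w0 p pD.
have [->|nz] := eqVneq p.2 0; first by rewrite !mul0r.
by apply: ler_wpM2l => //; apply: Fb; rewrite // lt0r nz.
Qed.

Lemma expected_correct_ge (f : input N -> bool) D eps : zero_sided f D eps ->
  (1 - eps) * (2 ^ N)%:R
  <= \sum_(p <- D) p.2 * (\sum_(X : input N) (output p.1 X == Some (f X)))%N%:R.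
Proof.
move=> zs; have -> : (1 - eps) * (2 ^ N)%:R = \sum_(X : input N) (1 - eps).
  by rewrite sumr_const card_ffun card_bool card_ord mulr_natr.
rewrite (eq_bigr (fun p => \sum_(X : input N) p.2 * (output p.1 X == Some (f X))%:R)).
  rewrite exchange_big /=; apply: ler_sum => X _; apply: le_trans (zs X).2 _.
  by rewrite big_mkcond /=; apply: ler_sum => p _; case: eqP; rewrite ?mulr1 ?mulr0.
by move=> p _; rewrite natr_sum mulr_sumr.
Qed.
End Distributions.

Local Open Scope ring_scope.

Theorem mainTheorem14 :
  exists c : R, forall (N : nat), leq 1 N ->
  forall eps : R, 0 <= eps <= 1 ->
  forall D : seq (xdt N * R), is_distribution D ->
  zero_sided (@majority N) D eps ->
  2 / 3 * N%:R - eps * N%:R - c * Num.sqrt (N%:R) <= (rcost D)%:R.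
Proof.
exists (2 / 3) => N N1 eps /andP [eps0 _] D distD zs.
set k := rcost D; set M : R := (2 ^ N)%:R; set n : R := N%:R; set r := Num.sqrt n.
set S : R := (\sum_(X : input N) absz (bias X))%N%:R.
pose C (t : xdt N) : R := (\sum_(X : input N) (output t X == Some (majority X)))%N%:R.
have trees : 2 * n * \sum_(p <- D) p.2 * C p.1 <= 3 * k%:R * M + 2 * S.
  rewrite mulr_sumr; under eq_bigr do rewrite mulrCA.
  apply: (mean_le (F := fun t => 2 * n * C t)) => // p pD p0.
  have := tree_cost_bound (never_wrong_support zs pD p0) (fun X => nqueries_le_rcost X pD p0).
  by rewrite -(ler_nat R) [in X in _ <= X]natrD !natrM.
have correct : (1 - eps) * M <= \sum_(p <- D) p.2 * C p.1 := expected_correct_ge zs.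
have bias_small : S <= M * r := sum_absz_bias_le R N1.
have M0 : 0 < M by rewrite ltr0n expn_gt0.
have n0 : 0 <= n by rewrite ler0n.
have key : M * (2 * n * (1 - eps)) <= M * (3 * k%:R + 2 * r).
  have : 2 * n * ((1 - eps) * M) <= 2 * n * \sum_(p <- D) p.2 * C p.1.
    by apply: ler_wpM2l => //; rewrite mulr_ge0.
  lra.
rewrite ler_pM2l // in key.
have : 0 <= eps * n by rewrite mulr_ge0.
lra.
Qed.
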